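(* Let $\varrho=\sum_{\omega\in\Omega}\varrho(\omega)|\omega\rangle\langle\omega|$ and $\sigma=\sum_{\omega\in\Omega}\sigma(\omega)|\omega\rangle\langle\omega|$ be unequal commuting density operators, diagonal in a common orthonormal basis $(|\omega\rangle)_{\omega\in\Omega}$ of a finite-dimensional Hilbert space. Assume there is a subset $\Omega_0\subseteq\Omega$, with $\Omega_1:=\Omega\setminus\Omega_0$, such that $\sigma(\Omega_0)\varrho(\omega)=\varrho(\Omega_0)\sigma(\omega)$ for $\omega\in\Omega_0$ and $\sigma(\Omega_1)\varrho(\omega)=\varrho(\Omega_1)\sigma(\omega)$ for $\omega\in\Omega_1$, and $\varrho(\Omega_k)\neq0$, $\sigma(\Omega_k)\ne0$ for $k=0,1$. Then \[ \overline{D}_\alpha^{\mathrm{test}}(\varrho\|\sigma)<\hat D_\alpha^{\mathrm{test}}(\varrho\|\sigma)=D_\alpha(\varrho\|\sigma),\qquad \alpha\in(0,1). \] In particular, this holds for any two unequal commuting qubit states with full support.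
   Context: $\varrho(\Omega_0):=\sum_{\omega\in\Omega_0}\varrho(\omega)$, etc. For probability vectors $p,q$ and $\alpha\in(0,1)$, $D_\alpha(p\|q)=\frac{1}{\alpha-1}\log\sum_\omega p(\omega)^\alpha q(\omega)^{1-\alpha}$; for commuting states $D_\alpha(\varrho\|\sigma)$ is the classical divergence of the eigenvalue vectors. A test is an operator $0\le T\le I$; $\mathcal T(X):=(\operatorname{Tr}XT,\operatorname{Tr}X(I-T))$. $D_\alpha^{\mathrm{test}}(\varrho\|\sigma):=\max_{0\le T\le I}D_\alpha(\mathcal T(\varrho)\|\mathcal T(\sigma))$, $\overline{D}_\alpha^{\mathrm{test}}(\varrho\|\sigma):=\limsup_{n\to\infty}\frac1n D_\alpha^{\mathrm{test}}(\varrho^{\otimes n}\|\sigma^{\otimes n})$, and $\hat D_\alpha^{\mathrm{test}}(\varrho\|\sigma):=\sup_{n\in\mathbb N}\frac1n D_\alpha^{\mathrm{test}}(\varrho^{\otimes n}\|\sigma^{\otimes n})$. *)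

From HB Require Import structures.
From mathcomp Require Import all_boot all_order all_algebra.
From mathcomp Require Import all_classical all_reals all_analysis.
From mathcomp Require Import complex mxtens.

Set Implicit Arguments.
Unset Strict Implicit.
Unset Printing Implicit Defensive.

Import Order.TTheory GRing.Theory Num.Theory.
Local Open Scope ring_scope.

Section QDefs.
Variable R : realType.
Local Notation C := (R[i]).

Definition diag_state (d : nat) (p : 'I_d -> R) : 'M[C]_d :=
  diag_mx (\row_i (Complex (p i) 0)).

Definition prob_vec (d : nat) (p : 'I_d -> R) : Prop :=
  (forall i, 0 <= p i) /\ \sum_i p i = 1.

(* positive semidefinite: v^* A v >= 0 (i.e. real and nonnegative) for all v *)
Definition psd (n : nat) (A : 'M[C]_n) : Prop :=
  forall v : 'I_n -> C, 0 <= \sum_i \sum_j (v i)^* * A i j * v j.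

Definition is_test (n : nat) (T : 'M[C]_n) : Prop := psd T /\ psd (1%:M - T).

Definition Dcl (I : finType) (a : R) (p q : I -> R) : \bar R :=
  let s := \sum_i (p i `^ a * q i `^ (1 - a)) in
  if s == 0 then +oo%E else ((a - 1)^-1 * ln s)%:E.

Definition test_meas (n : nat) (X T : 'M[C]_n) : bool -> R :=
  fun b => if b then complex.Re (\tr (X *m T))
           else complex.Re (\tr (X *m (1%:M - T))).

Definition Dtest (n : nat) (a : R) (rho sigma : 'M[C]_n) : \bar R :=
  ereal_sup [set Dcl a (test_meas rho T) (test_meas sigma T)
            | T in [set T : 'M[C]_n | is_test T]].

Definition Dtest_bar (d : nat) (a : R) (rho sigma : 'M[C]_d) : \bar R :=
  limn_esup (fun n : nat =>
    ((n%:R)^-1)%:E * Dtest a (rho ^t n) (sigma ^t n))%E.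

Definition Dtest_hat (d : nat) (a : R) (rho sigma : 'M[C]_d) : \bar R :=
  ereal_sup [set (((n%:R)^-1)%:E * Dtest a (rho ^t n) (sigma ^t n))%E
            | n in [set n : nat | (0 < n)%N]].

End QDefs.

(* Since [p / q] is constant on [Omega0] and on its complement, the test asking
   whether the outcome lies in [Omega0] loses nothing: one copy attains
   [D_a(p||q)], while data processing bounds every test on [n] copies by
   [n D_a(p||q)]; so the hat-divergence equals [D_a(p||q)].
   For the limsup, the likelihood ratio of [n] copies is constant on the
   [n + 1] type classes. By pigeonhole one class, with ratio [rho] and
   [q]-mass [b], carries a [1/(n+1)] share of the Renyi overlap [S(a)^n], where
   [S(u) = sum_w q(w) (p(w)/q(w))^u]. Any two-outcome test puts half of this
   class on one outcome, and half of each total probability on some outcome;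
   this forces the overlap of the test above [min((rho b)^a, b^(1-a)) / 2].
   Comparing with the moments [S(a/2)^n] and [S((1+a)/2)^n] bounds this below
   by [exp(n min(c1, c2) - O(log n))], and strict log-convexity of [S] (where
   [p <> q] is used) gives [min(c1, c2) > ln S(a)]. As [1/(a-1) < 0], the
   regularized test divergence stays a fixed distance below [D_a(p||q)]. *)

From HB Require Import structures.
From mathcomp Require Import all_boot all_order all_algebra.
From mathcomp Require Import all_classical all_reals all_analysis.
From mathcomp Require Import complex mxtens.
From mathcomp Require Import lra ring.

Set Implicit Arguments.
Unset Strict Implicit.
Unset Printing Implicit Defensive.

Import Order.TTheory GRing.Theory Num.Theory.
Local Open Scope ring_scope.

Lemma sum_mxtens (V : nmodType) m n (F : 'I_(m * n) -> V) :
  \sum_x F x = \sum_(i < m) \sum_(j < n) F (mxtens_index (i, j)).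
Proof.
rewrite pair_big (reindex (@mxtens_index m n)) /=; last first.
  by exists (@mxtens_unindex m n) => x _; rewrite (mxtens_indexK, mxtens_unindexK).
by apply: eq_bigr => -[i j].
Qed.

Section TensorPower.
Variables (R : comPzSemiRingType) (d : nat).
Implicit Types (f g : 'I_d -> R) (A : {set 'I_d}).

(* Like [ntensmx_rec], [tens_pow f k] has [k.+1] factors: [d ^ k.+2] is
   convertible to [d * d ^ k.+1], but [d ^ 1] is not to [d * d ^ 0]. *)
Fixpoint tens_pow f k : 'I_(d ^ k.+1) -> R :=
  if k is k'.+1 return 'I_(d ^ k.+1) -> R then
    fun x => f (@mxtens_unindex d (d ^ k'.+1) x).1 *
             @tens_pow f k' (@mxtens_unindex d (d ^ k'.+1) x).2
  else f.

Fixpoint tens_count A k : 'I_(d ^ k.+1) -> nat :=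
  if k is k'.+1 return 'I_(d ^ k.+1) -> nat then
    fun x => (((@mxtens_unindex d (d ^ k'.+1) x).1 \in A) +
              @tens_count A k' (@mxtens_unindex d (d ^ k'.+1) x).2)%N
  else fun x => (x \in A : nat).

Arguments tens_pow : clear implicits, simpl never.
Arguments tens_count : clear implicits, simpl never.

Lemma tens_powS f k x :
  tens_pow f k.+1 x = f (@mxtens_unindex d (d ^ k.+1) x).1 *
                      tens_pow f k (@mxtens_unindex d (d ^ k.+1) x).2.
Proof. by []. Qed.

Lemma tens_countS A k x :
  tens_count A k.+1 x = (((@mxtens_unindex d (d ^ k.+1) x).1 \in A) +
                         tens_count A k (@mxtens_unindex d (d ^ k.+1) x).2)%N.
Proof. by []. Qed.

Lemma sum_tens_pow f k : \sum_x tens_pow f k x = (\sum_i f i) ^+ k.+1.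
Proof.
elim: k => [|k IH]; first by rewrite expr1.
rewrite exprS -IH mulr_suml sum_mxtens; apply: eq_bigr => i _.
by rewrite mulr_sumr; apply: eq_bigr => j _; rewrite tens_powS mxtens_indexK.
Qed.

Lemma tens_powM f g k x :
  tens_pow (fun i => f i * g i) k x = tens_pow f k x * tens_pow g k x.
Proof. by elim: k x => [|k IH] x //; rewrite !tens_powS IH mulrACA. Qed.

Lemma eq_tens_pow f g k : f =1 g -> tens_pow f k =1 tens_pow g k.
Proof. by move=> fg; elim: k => [|k IH] x; rewrite ?tens_powS ?fg ?IH. Qed.

Lemma tens_count_le A k x : (tens_count A k x <= k.+1)%N.
Proof.
elim: k x => [|k IH] x; first by rewrite /tens_count; case: (_ \in _).
rewrite tens_countS; move: (IH (@mxtens_unindex d (d ^ k.+1) x).2).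
by case: (_ \in _) => /= h; [rewrite add1n | rewrite add0n leqW].
Qed.

Lemma tens_pow_if A (c0 c1 : R) k x :
  tens_pow (fun i => if i \in A then c0 else c1) k x =
  c0 ^+ tens_count A k x * c1 ^+ (k.+1 - tens_count A k x).
Proof.
elim: k x => [|k IH] x.
  by rewrite /tens_pow /tens_count; case: (x \in A); rewrite ?mulr1 ?mul1r.
rewrite tens_powS tens_countS IH; set y := @mxtens_unindex d (d ^ k.+1) x.
case: (y.1 \in A); first by rewrite [nat_of_bool _]/= add1n subSS mulrA -exprS.
by rewrite [nat_of_bool _]/= add0n (subSn (tens_count_le A _)) mulrCA -exprS.
Qed.

End TensorPower.

Arguments tens_pow {R d} f k : simpl never.
Arguments tens_count {d} A k : simpl never.

Lemma tens_pow_ge0 (R : numDomainType) d (f : 'I_d -> R) k x :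
  (forall i, 0 <= f i) -> 0 <= tens_pow f k x.
Proof. by move=> f0; elim: k x => [|k IH] x; rewrite ?tens_powS ?mulr_ge0. Qed.

Lemma tens_pow_powR (R : realType) d (f : 'I_d -> R) u k x :
  (forall i, 0 <= f i) -> tens_pow f k x `^ u = tens_pow (fun i => f i `^ u) k x.
Proof.
move=> f0; elim: k x => [|k IH] x //.
by rewrite !tens_powS powRM ?tens_pow_ge0 // IH.
Qed.

Lemma ntensmx_diag_state (R : realType) d (f : 'I_d -> R) k :
  diag_state f ^t k.+1 = diag_state (tens_pow f k).
Proof.
elim: k => [|k IH] //; rewrite ntensmxSS IH; apply/matrixP => i j.
case: (mxtens_indexP i) => i1 i2; case: (mxtens_indexP j) => j1 j2.
rewrite tensmxE /diag_state !mxE tens_powS mxtens_indexK /=.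
rewrite (inj_eq (can_inj (@mxtens_indexK d (d ^ k.+1)))) xpair_eqE.
case: (i1 =P j1) => _; case: (i2 =P j2) => _ /=; rewrite ?mulr0n ?mul0r ?mulr0 //.
by rewrite !mulr1n; simpc.
Qed.

Section Binarize.
Variables (R : numDomainType) (X : finType).
Implicit Types (P w : X -> R) (c : bool).

(* For a diagonal state [P] and a test with diagonal [w], this is the paper's
   [T(P)], with [true] the outcome of [T]. *)
Definition binarize P w c : R :=
  \sum_x P x * (if c then w x else 1 - w x).

Lemma binarize_sum P w : \sum_c binarize P w c = \sum_x P x.
Proof.
rewrite big_bool -big_split; apply: eq_bigr => x _ /=.
by rewrite -mulrDr addrC subrK mulr1.
Qed.

End Binarize.

Section DiagonalTests.
Variable R : realType.
Local Notation C := R[i].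

Lemma Re_sum n (F : 'I_n -> C) : complex.Re (\sum_i F i) = \sum_i complex.Re (F i).
Proof.
apply: (big_ind2 (fun (z : C) (r : R) => complex.Re z = r)) => //.
by move=> [? ?] ? [? ?] ? /= <- <-.
Qed.

Definition re_diag n (T : 'M[C]_n) (x : 'I_n) : R := complex.Re (T x x).

Lemma test_meas_diag_state n (P : 'I_n -> R) (T : 'M[C]_n) :
  test_meas (diag_state P) T = binarize P (re_diag T).
Proof.
apply/funext => c; rewrite /test_meas /binarize /diag_state.
case: c; rewrite mul_diag_mx /mxtrace Re_sum; apply: eq_bigr => i _;
  rewrite !mxE /re_diag /=; case: (T i i) => u v /=; rewrite ?eqxx /= ?mul0r ?subr0 //.
Qed.

Lemma psd_re_diag_ge0 n (T : 'M[C]_n) i : psd T -> 0 <= re_diag T i.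
Proof.
move=> /(_ (fun j => (j == i)%:R)); rewrite (bigD1 i) //= (bigD1 i) //= eqxx.
rewrite [X in _ + X + _]big1 => [|j /negbTE ->]; last by rewrite mulr0.
rewrite [X in _ + X]big1 => [|j /negbTE ->]; last first.
  by rewrite conjC0 big1 // => k _; rewrite !mul0r.
by rewrite conjC1 mul1r mulr1 !addr0 lecE => /andP[].
Qed.

Lemma re_diag_test n (T : 'M[C]_n) i : is_test T -> 0 <= re_diag T i <= 1.
Proof.
case=> /psd_re_diag_ge0 -> /(psd_re_diag_ge0 i).
by rewrite /re_diag !mxE eqxx /=; case: (T i i) => u v /=; rewrite subr_ge0.
Qed.

Lemma re_diag_diag_state n (w : 'I_n -> R) : re_diag (diag_state w) =1 w.
Proof. by move=> i; rewrite /re_diag !mxE eqxx mulr1n. Qed.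

Lemma psd_diag_state n (g : 'I_n -> R) : (forall i, 0 <= g i) -> psd (diag_state g).
Proof.
move=> g0 v; apply: sumr_ge0 => i _.
rewrite (bigD1 i) //= big1 => [|j /negbTE ne]; last first.
  by rewrite !mxE eq_sym ne mulr0n mulr0 mul0r.
rewrite addr0 !mxE eqxx mulr1n mulrAC.
by apply: mulr_ge0; [rewrite mulrC mul_conjC_ge0 | rewrite lecE /= eqxx g0].
Qed.

Lemma is_test_diag_state n (w : 'I_n -> R) :
  (forall i, 0 <= w i <= 1) -> is_test (diag_state w).
Proof.
move=> w01; split; first by apply: psd_diag_state => i; case/andP: (w01 i).
have -> : 1%:M - diag_state w = diag_state (fun i => 1 - w i).
  apply/matrixP => i j; rewrite !mxE.
  by case: eqP => _; rewrite ?mulr1n ?mulr0n ?subr0 //; simpc.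
by apply: psd_diag_state => i; rewrite subr_ge0; case/andP: (w01 i).
Qed.

End DiagonalTests.

Lemma exists_ge_mean (R : realFieldType) m (F : 'I_m.+1 -> R) :
  exists k, (\sum_j F j) / m.+1%:R <= F k.
Proof.
have [k _ kmax] := @arg_maxP _ _ _ ord0 xpredT F isT; exists k.
rewrite ler_pdivrMr ?ltr0n // -[X in X%:R]card_ord mulr_natr -sumr_const.
by apply: ler_sum => j _; exact: kmax.
Qed.

Section Overlap.
Variables (R : realType) (a : R).
Hypothesis a01 : 0 < a < 1.

Let a_gt0 : 0 < a. Proof. by case/andP: a01. Qed.
Let a_lt1 : a < 1. Proof. by case/andP: a01. Qed.
Let a1_gt0 : 0 < 1 - a. Proof. by rewrite subr_gt0. Qed.

Definition ovl (x y : R) := x `^ a * y `^ (1 - a).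

Lemma ovl_ge0 x y : 0 <= ovl x y.
Proof. by rewrite /ovl mulr_ge0 ?powR_ge0. Qed.

Lemma ovl_id x : 0 <= x -> ovl x x = x.
Proof.
move=> x0; rewrite /ovl -powRD; last by rewrite addrC subrK oner_eq0.
by rewrite addrC subrK powRr1.
Qed.

Lemma ovlZ w x y : 0 <= w -> 0 <= x -> 0 <= y -> ovl (w * x) (w * y) = w * ovl x y.
Proof.
by move=> w0 x0 y0; rewrite /ovl !powRM // mulrACA -[_ * w `^ _]/(ovl w w) ovl_id.
Qed.

Lemma ovlZl l y : 0 <= l -> 0 <= y -> ovl (l * y) y = l `^ a * y.
Proof.
by move=> l0 y0; rewrite /ovl powRM // -mulrA -[_ * y `^ _]/(ovl y y) ovl_id.
Qed.

Lemma ovl1r y : ovl 1 y = y `^ (1 - a). Proof. by rewrite /ovl powR1 mul1r. Qed.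
Lemma ovll1 x : ovl x 1 = x `^ a. Proof. by rewrite /ovl powR1 mulr1. Qed.

Lemma ler_ovl x1 x2 y1 y2 :
  0 <= x1 -> 0 <= y1 -> x1 <= x2 -> y1 <= y2 -> ovl x1 y1 <= ovl x2 y2.
Proof.
move=> x10 y10 x12 y12; apply: ler_pM; rewrite ?powR_ge0 //.
  exact: (@ge0_ler_powR R a (ltW a_gt0) x1 x2 x10 (le_trans x10 x12) x12).
exact: (@ge0_ler_powR R (1 - a) (ltW a1_gt0) y1 y2 y10 (le_trans y10 y12) y12).
Qed.

(* Hoelder's inequality with the conjugate exponents [1/a] and [1/(1-a)]. *)
Lemma ovl_superadditive x1 x2 y1 y2 : 0 <= x1 -> 0 <= x2 -> 0 <= y1 -> 0 <= y2 ->
  ovl x1 y1 + ovl x2 y2 <= ovl (x1 + x2) (y1 + y2).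
Proof.
move=> x10 x20 y10 y20.
have := @hoelder2 R (x1 `^ a) (x2 `^ a) (y1 `^ (1 - a)) (y2 `^ (1 - a)) a^-1 (1 - a)^-1.
rewrite !powR_ge0 !invr_gt0 a_gt0 a1_gt0 !invrK addrC subrK.
have powRK z b : 0 <= z -> 0 < b -> (z `^ b) `^ b^-1 = z.
  by move=> z0 b0; rewrite -powRrM mulfV ?gt_eqF ?powRr1.
by move=> /(_ isT isT isT isT isT isT erefl); rewrite !powRK.
Qed.

Lemma sum_ovl_le (I : Type) (r : seq I) (x y : I -> R) :
  (forall i, 0 <= x i) -> (forall i, 0 <= y i) ->
  \sum_(i <- r) ovl (x i) (y i) <= ovl (\sum_(i <- r) x i) (\sum_(i <- r) y i).
Proof.
move=> x0 y0; elim: r => [|j r IH]; first by rewrite !big_nil ovl_ge0.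
rewrite !big_cons; apply: le_trans (ovl_superadditive _ _ _ _) => //.
- by rewrite lerD2l.
- exact: sumr_ge0.
- exact: sumr_ge0.
Qed.

Lemma ovl_heavy_half r s r' s' rho b :
  0 <= r -> 0 <= s -> r + r' = 1 -> s + s' = 1 -> 0 <= rho -> 0 <= b -> b <= 1 ->
  rho * b / 2 <= r -> b / 2 <= s ->
  (rho * b) `^ a / 2 <= ovl r s + ovl r' s' \/ b `^ (1 - a) / 2 <= ovl r s + ovl r' s'.
Proof.
move=> r0 s0 rr' ss' rho0 b0 b1 hr hs.
have half x y X Y : 0 <= x -> 0 <= y -> x / 2 <= X -> y / 2 <= Y -> ovl x y / 2 <= ovl X Y.
  move=> x0 y0 xX yY; rewrite mulrC -ovlZ ?invr_ge0 ?ler0n //.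
  by apply: ler_ovl; rewrite 1?mulrC // mulr_ge0 ?invr_ge0 ?ler0n.
have O1 : ovl r s <= ovl r s + ovl r' s' by rewrite lerDl ovl_ge0.
have O2 : ovl r' s' <= ovl r s + ovl r' s' by rewrite lerDr ovl_ge0.
have [r_ge|r_lt] := lerP 2^-1 r.
  by right; apply: le_trans O1; rewrite -ovl1r; apply: half => //; lra.
have [s_ge|s_lt] := lerP 2^-1 s.
  by left; apply: le_trans O1; rewrite -ovll1; apply: half; rewrite ?mulr_ge0 //; lra.
by right; apply: le_trans O2; rewrite -ovl1r; apply: half => //; lra.
Qed.

Section Binary.
Variables (X : finType) (P Q w : X -> R).
Hypotheses (P_ge0 : forall x, 0 <= P x) (Q_ge0 : forall x, 0 <= Q x).
Hypothesis w01 : forall x, 0 <= w x <= 1.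

Definition binary_ovl := \sum_c ovl (binarize P w c) (binarize Q w c).

Let wc_ge0 c x : 0 <= if c then w x else 1 - w x.
Proof. by case: c; case/andP: (w01 x); rewrite // subr_ge0. Qed.

Let binarize_ge0 F c : (forall x, 0 <= F x) -> 0 <= binarize F w c.
Proof. by move=> F0; apply: sumr_ge0 => x _; rewrite mulr_ge0. Qed.

Lemma sum_ovl_le_binary : \sum_x ovl (P x) (Q x) <= binary_ovl.
Proof.
have split_ovl x :
    ovl (P x) (Q x) = \sum_c ovl (P x * if c then w x else 1 - w x)
                                 (Q x * if c then w x else 1 - w x).
  rewrite big_bool /= !(mulrC (P x)) !(mulrC (Q x)).
  rewrite !ovlZ ?(wc_ge0 true) ?(wc_ge0 false) //.
  by rewrite -mulrDl addrC subrK mul1r.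
rewrite (eq_bigr _ (fun x _ => split_ovl x)) exchange_big /=.
by apply: ler_sum => c _; apply: sum_ovl_le => x; rewrite mulr_ge0.
Qed.

Lemma binary_ovl_class (A : pred X) rho :
  \sum_x P x = 1 -> \sum_x Q x = 1 -> 0 <= rho -> (forall x, A x -> P x = rho * Q x) ->
  let b := \sum_(x | A x) Q x in
  (rho * b) `^ a / 2 <= binary_ovl \/ b `^ (1 - a) / 2 <= binary_ovl.
Proof.
move=> P1 Q1 rho0 PQ b.
have sum_cond_le (F : X -> R) : (forall x, 0 <= F x) -> \sum_(x | A x) F x <= \sum_x F x.
  by move=> F0; rewrite [X in _ <= X](bigID A) /= lerDl sumr_ge0.
pose m c := \sum_(x | A x) Q x * (if c then w x else 1 - w x).
have m_le c : m c <= binarize Q w c by apply: sum_cond_le => x; rewrite mulr_ge0.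
have rho_m_le c : rho * m c <= binarize P w c.
  rewrite mulr_sumr (eq_bigr (fun x => P x * (if c then w x else 1 - w x))).
    by apply: sum_cond_le => x; rewrite mulr_ge0.
  by move=> x Ax; rewrite mulrA -PQ.
have m_sum : m true + m false = b.
  by rewrite -big_split; apply: eq_bigr => x _ /=; rewrite -mulrDr addrC subrK mulr1.
have b0 : 0 <= b by exact: sumr_ge0.
have b1 : b <= 1 by rewrite -Q1; exact: sum_cond_le.
have [c hc] : exists c, b / 2 <= m c.
  by case: (lerP (b / 2) (m true)) => h; [exists true | exists false]; lra.
have sum_boolE (F : bool -> R) : \sum_c' F c' = F c + F (~~ c) :> R.
  by rewrite big_bool; case: c {hc}; rewrite // addrC.
have [binP binQ] := (binarize_sum P w, binarize_sum Q w).
rewrite /binary_ovl sum_boolE; apply: ovl_heavy_half => //.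
- exact: binarize_ge0.
- exact: binarize_ge0.
- by rewrite -sum_boolE binP.
- by rewrite -sum_boolE binQ.
- apply: le_trans (rho_m_le c); rewrite -mulrA ler_wpM2l //.
- exact: le_trans (m_le c).
Qed.

End Binary.

(* [a ln (rho b)] and [(1 - a) ln b] are affine combinations of the logarithms
   of the three moments [rho ^ u * b], [u = a, a/2, (1+a)/2]. *)
Lemma ln_moment_bounds rho b A B G :
  0 < rho -> 0 < b -> 0 < A ->
  A <= rho `^ a * b -> rho `^ (a / 2) * b <= B -> rho `^ ((1 + a) / 2) * b <= G ->
  (2 - a) * ln A - 2 * (1 - a) * ln B <= a * ln (rho * b) /\
  (1 + a) * ln A - 2 * a * ln G <= (1 - a) * ln b.
Proof.
move=> rho0 b0 A0 hA hB hG.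
have ln_moment u : ln (rho `^ u * b) = u * ln rho + ln b.
  by rewrite lnM ?posrE ?powR_gt0 // ln_powR.
have mom_gt0 u : 0 < rho `^ u * b by rewrite mulr_gt0 ?powR_gt0.
have lnA : ln A <= a * ln rho + ln b by rewrite -ln_moment ler_ln ?posrE.
have lnB : a / 2 * ln rho + ln b <= ln B.
  by rewrite -ln_moment ler_ln ?posrE // (lt_le_trans (mom_gt0 _) hB).
have lnG : (1 + a) / 2 * ln rho + ln b <= ln G.
  by rewrite -ln_moment ler_ln ?posrE // (lt_le_trans (mom_gt0 _) hG).
have a0 := a_gt0; have a1 := a_lt1.
have c0 : 0 <= 2 - a by lra.
have c1 : 0 <= 2 * (1 - a) by lra.
have c2 : 0 <= 1 + a by lra.
have c3 : 0 <= 2 * a by lra.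
rewrite lnM ?posrE //; split.
  have := ler_wpM2l c0 lnA; have := ler_wpM2l c1 lnB; lra.
have := ler_wpM2l c2 lnA; have := ler_wpM2l c3 lnG; lra.
Qed.

Lemma DclE (I : finType) (p q : I -> R) : 0 < \sum_i ovl (p i) (q i) ->
  Dcl a p q = ((a - 1)^-1 * ln (\sum_i ovl (p i) (q i)))%:E.
Proof. by move=> /gt_eqF s0; rewrite /Dcl /= s0. Qed.

Lemma Dtest_diag_le n (P Q : 'I_n -> R) L :
  (forall T, is_test T ->
     0 < binary_ovl P Q (re_diag T) /\ L <= ln (binary_ovl P Q (re_diag T))) ->
  (Dtest a (diag_state P) (diag_state Q) <= ((a - 1)^-1 * L)%:E)%E.
Proof.
move=> HT; apply: ge_ereal_sup => _ [T hT <-].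
have [ovl_gt0 L_le] := HT T hT.
rewrite !test_meas_diag_state (DclE ovl_gt0) lee_fin ler_nM2l //.
by rewrite invr_lt0 subr_lt0.
Qed.

End Overlap.

Lemma limn_esup_le (R : realType) (u : (\bar R)^nat) (l : \bar R) N :
  (forall n, (N <= n)%N -> (u n <= l)%E) -> (limn_esup u <= l)%E.
Proof.
move=> ul; rewrite limn_esup_lim.
rewrite (cvg_lim _ (ereal_nonincreasing_cvgn (nonincreasing_esups u))) //.
apply: le_trans (ereal_inf_lbound _) _; first by exists N.
by apply: ge_ereal_sup => _ [n Nn <-]; exact: ul.
Qed.

(* From [expR x >= x ^ 2 / 2]. *)
Lemma ln_le_eps_mul (R : realType) (eps : R) : 0 < eps ->
  exists N, forall n, (N <= n)%N -> ln (n.+1%:R : R) <= eps * n%:R.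
Proof.
move=> eps0; exists (Num.truncn (2 / eps ^+ 2)).+1 => n Nn.
have n_gt : 2 / eps ^+ 2 < n%:R by apply: lt_le_trans (truncnS_gt _) _; rewrite ler_nat.
rewrite -[leRHS]expRK ler_ln ?posrE ?ltr0n ?expR_gt0 //.
apply: le_trans (expR_ge1Dxn 1 _); last by rewrite mulr_ge0 // ltW.
rewrite -addn1 natrD addrC lerD2l (_ : 2`!%:R = 2 :> R) //.
have : 2 <= eps ^+ 2 * n%:R by rewrite -ler_pdivrMl ?exprn_gt0 // mulrC ltW.
have : 0 <= n%:R :> R by [].
nra.
Qed.

Lemma powR_inj_neq (R : realType) (x y t : R) :
  0 < x -> 0 < y -> t != 0 -> x != y -> x `^ t != y `^ t.
Proof.
move=> x0 y0 t0; apply: contra_neq; rewrite /powR !gt_eqF //.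
by move/expR_inj/(mulfI t0)/ln_inj; apply; rewrite posrE.
Qed.

(* Strict Cauchy-Schwarz: the difference of the two sides is
   [w0 w1 (l0 l1) ^ (u - t) (l0 ^ t - l1 ^ t) ^ 2]. *)
Lemma mix_powR_sqr_lt (R : realType) (w0 w1 l0 l1 u t : R) :
  0 < w0 -> 0 < w1 -> 0 < l0 -> 0 < l1 -> l0 != l1 -> t != 0 ->
  (w0 * l0 `^ u + w1 * l1 `^ u) ^+ 2 <
  (w0 * l0 `^ (u - t) + w1 * l1 `^ (u - t)) * (w0 * l0 `^ (u + t) + w1 * l1 `^ (u + t)).
Proof.
move=> w00 w10 l00 l10 l01 t0.
have shift l : 0 < l ->
    l `^ u = l `^ (u - t) * l `^ t /\ l `^ (u + t) = l `^ (u - t) * l `^ t ^+ 2.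
  move=> l_gt0; have pD v s : l `^ (v + s) = l `^ v * l `^ s.
    by rewrite powRD // (gt_eqF l_gt0) implybT.
  by rewrite -pD subrK expr2 mulrA -!pD subrK.
have [-> ->] := shift _ l00; have [-> ->] := shift _ l10.
have lt_neq := powR_inj_neq l00 l10 t0 l01.
move: lt_neq (powR_gt0 (u - t) l00) (powR_gt0 (u - t) l10).
set A := l0 `^ (u - t); set B := l1 `^ (u - t); set al := l0 `^ t; set be := l1 `^ t.
move=> neq A0 B0; rewrite -subr_gt0.
have -> : (w0 * A + w1 * B) * (w0 * (A * al ^+ 2) + w1 * (B * be ^+ 2)) -
          (w0 * (A * al) + w1 * (B * be)) ^+ 2 = w0 * w1 * (A * B) * (al - be) ^+ 2.
  by ring.
apply: mulr_gt0; first by rewrite !mulr_gt0.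
by rewrite lt_def sqrf_eq0 subr_eq0 neq sqr_ge0.
Qed.

Section BlockProportional.
Variables (R : realType) (d : nat) (p q : 'I_d -> R) (Om : {set 'I_d}) (a : R).
Hypotheses (hp : prob_vec p) (hq : prob_vec q) (p_neq_q : p <> q).
Hypothesis p_prop_q_in :
  forall w, w \in Om -> (\sum_(i in Om) q i) * p w = (\sum_(i in Om) p i) * q w.
Hypothesis p_prop_q_out :
  forall w, w \in ~: Om -> (\sum_(i in ~: Om) q i) * p w = (\sum_(i in ~: Om) p i) * q w.
Hypotheses (P0_neq0 : \sum_(i in Om) p i != 0) (Q0_neq0 : \sum_(i in Om) q i != 0).
Hypotheses (P1_neq0 : \sum_(i in ~: Om) p i != 0) (Q1_neq0 : \sum_(i in ~: Om) q i != 0).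
Hypothesis a01 : 0 < a < 1.

Local Notation P0 := (\sum_(i in Om) p i).
Local Notation P1 := (\sum_(i in ~: Om) p i).
Local Notation Q0 := (\sum_(i in Om) q i).
Local Notation Q1 := (\sum_(i in ~: Om) q i).

Let p_ge0 i : 0 <= p i. Proof. by case: hp. Qed.
Let q_ge0 i : 0 <= q i. Proof. by case: hq. Qed.
Let a_gt0 : 0 < a. Proof. by case/andP: a01. Qed.
Let a_lt1 : a < 1. Proof. by case/andP: a01. Qed.

Let sum_gt0 (F : 'I_d -> R) (A : {set 'I_d}) :
  (forall i, 0 <= F i) -> \sum_(i in A) F i != 0 -> 0 < \sum_(i in A) F i.
Proof. by move=> F0 nz; rewrite lt_def nz sumr_ge0. Qed.

Let P0_gt0 : 0 < P0. Proof. exact: sum_gt0. Qed.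
Let P1_gt0 : 0 < P1. Proof. exact: sum_gt0. Qed.
Let Q0_gt0 : 0 < Q0. Proof. exact: sum_gt0. Qed.
Let Q1_gt0 : 0 < Q1. Proof. exact: sum_gt0. Qed.

Let sum_splitOm (F : 'I_d -> R) :
  \sum_i F i = \sum_(i in Om) F i + \sum_(i in ~: Om) F i.
Proof. by rewrite (bigID (mem Om)) /=; congr (_ + _); apply: eq_bigl => i; rewrite inE. Qed.

Let lam0 := P0 / Q0.
Let lam1 := P1 / Q1.
Let lam i := if i \in Om then lam0 else lam1.

Let lam0_gt0 : 0 < lam0. Proof. exact: divr_gt0. Qed.
Let lam1_gt0 : 0 < lam1. Proof. exact: divr_gt0. Qed.
Let lam_ge0 i : 0 <= lam i. Proof. by rewrite /lam; case: ifP => _; exact: ltW. Qed.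

Lemma p_lam i : p i = lam i * q i.
Proof.
rewrite /lam /lam0 /lam1; case: ifPn => i_Om.
  by rewrite mulrAC -p_prop_q_in // mulrAC mulfV ?mul1r.
by rewrite mulrAC -p_prop_q_out ?inE // mulrAC mulfV ?mul1r.
Qed.

Let S u := lam0 `^ u * Q0 + lam1 `^ u * Q1.

Lemma sum_lam_powR u : \sum_i lam i `^ u * q i = S u.
Proof.
rewrite sum_splitOm /S !mulr_sumr; congr (_ + _); apply: eq_bigr => i.
  by rewrite /lam => ->.
by rewrite inE /lam => /negbTE ->.
Qed.

Let S_gt0 u : 0 < S u.
Proof. by rewrite addr_gt0 // mulr_gt0 // powR_gt0. Qed.

Let S0 : S 0 = 1.
Proof. by rewrite /S !powRr0 !mul1r -sum_splitOm; case: hq. Qed.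

Let S1 : S 1 = 1.
Proof.
by rewrite /S !powRr1 ?ltW // !divfK ?gt_eqF // -sum_splitOm; case: hp.
Qed.

Lemma lam0_neq_lam1 : lam0 != lam1.
Proof.
apply/eqP => l01; apply: p_neq_q; apply/funext => i.
have lamE j : lam j = lam0 by rewrite /lam l01; case: ifP.
have := S1; rewrite /S -l01 powRr1 ?ltW // -mulrDr -sum_splitOm.
by case: hq => _ -> /[!mulr1] lam0_1; rewrite p_lam lamE lam0_1 mul1r.
Qed.

Lemma S_sqr_lt u t : t != 0 -> S u ^+ 2 < S (u - t) * S (u + t).
Proof.
move=> t0; rewrite /S !(mulrC _ Q0) !(mulrC _ Q1).
exact: mix_powR_sqr_lt lam0_neq_lam1 t0.
Qed.

(* The rates of the two lower bounds of [ln_moment_bounds] for [n] copies. *)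
Let c1 := (2 - a) * ln (S a) - 2 * (1 - a) * ln (S (a / 2)).
Let c2 := (1 + a) * ln (S a) - 2 * a * ln (S ((1 + a) / 2)).

Let ln_sqr_lt u t : t != 0 -> S (u - t) * S (u + t) = S a -> 2 * ln (S u) < ln (S a).
Proof.
move=> t0 St; rewrite mulr_natl -lnXn // ltr_ln ?posrE ?exprn_gt0 //.
by rewrite -St S_sqr_lt.
Qed.

Lemma ln_S_lt_min_c : ln (S a) < Num.min c1 c2.
Proof.
have a0 := a_gt0; have a1 := a_lt1.
have h1 : 2 * ln (S (a / 2)) < ln (S a).
  apply: (@ln_sqr_lt _ (a / 2)); first by rewrite mulf_neq0 ?invr_eq0 ?gt_eqF.
  by rewrite subrr S0 mul1r -splitr.
have h2 : 2 * ln (S ((1 + a) / 2)) < ln (S a).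
  apply: (@ln_sqr_lt _ ((1 - a) / 2)).
    by rewrite mulf_neq0 ?invr_eq0 // subr_eq0 gt_eqF.
  have -> : (1 + a) / 2 - (1 - a) / 2 = a by field.
  have -> : (1 + a) / 2 + (1 - a) / 2 = 1 by field.
  by rewrite S1 mulr1.
rewrite lt_min /c1 /c2; apply/andP; split.
  have : 0 < (1 - a) * (ln (S a) - 2 * ln (S (a / 2))) by rewrite mulr_gt0 ?subr_gt0.
  lra.
have : 0 < a * (ln (S a) - 2 * ln (S ((1 + a) / 2))) by rewrite mulr_gt0 ?subr_gt0.
lra.
Qed.

Lemma Dcl_eq : Dcl a p q = ((a - 1)^-1 * ln (S a))%:E.
Proof.
have ovl_pq i : ovl a (p i) (q i) = lam i `^ a * q i by rewrite p_lam ovlZl.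
by rewrite DclE // (eq_bigr _ (fun i _ => ovl_pq i)) sum_lam_powR.
Qed.

Let sum_tens_pow_prob (f : 'I_d -> R) k : prob_vec f -> \sum_x tens_pow f k x = 1.
Proof. by case=> _ f1; rewrite sum_tens_pow f1 expr1n. Qed.

Lemma tens_pow_lam k x : tens_pow p k x = tens_pow lam k x * tens_pow q k x.
Proof. by rewrite -tens_powM; apply: eq_tens_pow => i; exact: p_lam. Qed.

Lemma sum_tens_pow_lam_powR k u :
  \sum_x tens_pow lam k x `^ u * tens_pow q k x = S u ^+ k.+1.
Proof.
under eq_bigr do rewrite tens_pow_powR // -tens_powM.
by rewrite sum_tens_pow sum_lam_powR.
Qed.

Let test_ovl k T := binary_ovl a (tens_pow p k) (tens_pow q k) (re_diag T).

Lemma test_ovl_ge k (T : 'M[R[i]]_(d ^ k.+1)) : is_test T -> S a ^+ k.+1 <= test_ovl T.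
Proof.
move=> hT; rewrite -sum_tens_pow_lam_powR.
rewrite (eq_bigr (fun x => ovl a (tens_pow p k x) (tens_pow q k x))) => [|x _].
  by apply: sum_ovl_le_binary => // x; rewrite ?tens_pow_ge0 ?re_diag_test.
by rewrite tens_pow_lam ovlZl ?tens_pow_ge0.
Qed.

Lemma test_ovl_gt0 k (T : 'M[R[i]]_(d ^ k.+1)) : is_test T -> 0 < test_ovl T.
Proof. by move=> hT; apply: lt_le_trans (test_ovl_ge hT); rewrite exprn_gt0. Qed.

(* Type classes of [Om ^ k.+1]: the likelihood ratio of the [k.+1]-fold
   product is [rho k j] on the strings with [j] letters in [Om]. *)
Let rho k (j : nat) := lam0 ^+ j * lam1 ^+ (k.+1 - j).
Let mass k (j : nat) := \sum_(x | tens_count Om k x == j) tens_pow q k x.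

Lemma sum_class_moment k u : \sum_(j < k.+2) rho k j `^ u * mass k j = S u ^+ k.+1.
Proof.
rewrite -sum_tens_pow_lam_powR.
rewrite (partition_big (fun x => inord (tens_count Om k x) : 'I_k.+2) xpredT) //=.
apply: eq_bigr => j _; rewrite /mass mulr_sumr; apply: eq_big => x.
  by rewrite -val_eqE /= inordK // ltnS tens_count_le.
by move=> /eqP <-; rewrite /rho tens_pow_if.
Qed.

Lemma exists_heavy_class k : exists j : 'I_k.+2,
  [/\ 0 < rho k j, 0 < mass k j,
      k.+1%:R * c1 - 2 * ln k.+2%:R <= a * ln (rho k j * mass k j) &
      k.+1%:R * c2 - 2 * ln k.+2%:R <= (1 - a) * ln (mass k j)].
Proof.
have [j hj] := exists_ge_mean (fun j : 'I_k.+2 => rho k j `^ a * mass k j).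
rewrite sum_class_moment in hj.
have A_gt0 : 0 < S a ^+ k.+1 / k.+2%:R by rewrite divr_gt0 ?exprn_gt0.
have rho_gt0 : 0 < rho k j by rewrite mulr_gt0 ?exprn_gt0.
have mass_gt0 : 0 < mass k j.
  rewrite lt_def sumr_ge0 ?andbT => [|x _]; last exact: tens_pow_ge0.
  by apply: contraTneq hj => ->; rewrite mulr0 -ltNge.
have mom_le u : rho k j `^ u * mass k j <= S u ^+ k.+1.
  rewrite -(sum_class_moment k u) (bigD1 j) //= lerDl sumr_ge0 // => i _.
  by rewrite mulr_ge0 ?powR_ge0 ?sumr_ge0 // => x _; rewrite tens_pow_ge0.
have [h1 h2] := ln_moment_bounds a01 rho_gt0 mass_gt0 A_gt0 hj (mom_le _) (mom_le _).
rewrite ln_div ?posrE ?exprn_gt0 // !lnXn // -!(mulr_natl (ln _)) in h1 h2.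
have : 0 <= a * ln k.+2%:R by rewrite mulr_ge0 ?ln_ge0 ?ler1n // ltW.
have : 0 <= (1 - a) * ln k.+2%:R by rewrite mulr_ge0 ?ln_ge0 ?ler1n // subr_ge0 ltW.
by exists j; split => //; rewrite /c1 /c2; lra.
Qed.

Lemma ln_test_ovl_ge k (T : 'M[R[i]]_(d ^ k.+1)) : is_test T ->
  k.+1%:R * Num.min c1 c2 - 2 * ln k.+2%:R - ln 2 <= ln (test_ovl T).
Proof.
move=> hT; have [j [rho_gt0 mass_gt0 hc1 hc2]] := exists_heavy_class k.
have ovl_gt0 := test_ovl_gt0 hT.
have ln_half X : 0 < X -> X / 2 <= test_ovl T -> ln X - ln 2 <= ln (test_ovl T).
  by move=> X0; rewrite -ler_ln ?posrE ?divr_gt0 // ln_div ?posrE.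
have [min_c1 min_c2] : k.+1%:R * Num.min c1 c2 <= k.+1%:R * c1 /\
                       k.+1%:R * Num.min c1 c2 <= k.+1%:R * c2.
  by split; rewrite ler_wpM2l // ge_min lexx ?orbT.
have class_prop x : tens_count Om k x == j -> tens_pow p k x = rho k j * tens_pow q k x.
  by move=> /eqP <-; rewrite tens_pow_lam /rho tens_pow_if.
have := binary_ovl_class a01 (fun x => tens_pow_ge0 x p_ge0) (fun x => tens_pow_ge0 x q_ge0)
  (fun x => re_diag_test x hT) (sum_tens_pow_prob k hp) (sum_tens_pow_prob k hq)
  (ltW rho_gt0) class_prop.
case=> /ln_half; rewrite ln_powR.
  by move=> /(_ (powR_gt0 _ (mulr_gt0 rho_gt0 mass_gt0))); lra.
by move=> /(_ (powR_gt0 _ mass_gt0)); lra.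
Qed.

Lemma Dtest_pow_le k :
  (Dtest a (diag_state p ^t k.+1) (diag_state q ^t k.+1) <=
   ((a - 1)^-1 * (k.+1%:R * ln (S a)))%:E)%E.
Proof.
rewrite !ntensmx_diag_state; apply: Dtest_diag_le => // T hT.
split; first exact: test_ovl_gt0.
by rewrite mulr_natl -lnXn // ler_ln ?posrE ?exprn_gt0 ?test_ovl_gt0 ?test_ovl_ge.
Qed.

Lemma Dtest_pow_le_rate k :
  (Dtest a (diag_state p ^t k.+1) (diag_state q ^t k.+1) <=
   ((a - 1)^-1 * (k.+1%:R * Num.min c1 c2 - 2 * ln k.+2%:R - ln 2))%:E)%E.
Proof.
rewrite !ntensmx_diag_state; apply: Dtest_diag_le => // T hT.
by split; [exact: test_ovl_gt0 | exact: ln_test_ovl_ge].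
Qed.

Lemma Dtest_one_ge :
  (((a - 1)^-1 * ln (S a))%:E <= Dtest a (diag_state p ^t 1) (diag_state q ^t 1))%E.
Proof.
pose w i : R := (i \in Om)%:R.
have w01 i : 0 <= w i <= 1 by rewrite /w; case: (i \in Om); rewrite ?lexx ?ler01.
have bin_in F : \sum_i F i * w i = \sum_(i in Om) F i.
  rewrite [RHS]big_mkcond; apply: eq_bigr => i _; rewrite /w.
  by case: (i \in Om); rewrite ?mulr1 ?mulr0.
have bin_out F : \sum_i F i * (1 - w i) = \sum_(i in ~: Om) F i.
  rewrite [RHS]big_mkcond; apply: eq_bigr => i _; rewrite /w inE.
  by case: (i \in Om); rewrite /= ?subrr ?subr0 ?mulr1 ?mulr0.
have Sa : \sum_c ovl a (binarize p w c) (binarize q w c) = S a.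
  rewrite big_bool /binarize /= !bin_in !bin_out.
  by rewrite -{1}(divfK Q0_neq0 P0) -{1}(divfK Q1_neq0 P1) !ovlZl ?ltW.
rewrite ntensmx1; apply: ereal_sup_ubound; exists (diag_state w).
  exact: is_test_diag_state.
rewrite !test_meas_diag_state (funext (re_diag_diag_state w)) DclE Sa //.
Qed.

Lemma Dtest_hat_eq : Dtest_hat a (diag_state p) (diag_state q) = Dcl a p q.
Proof.
rewrite Dcl_eq; apply/le_anti/andP; split.
  apply: ge_ereal_sup => _ [[|k] // _ <-].
  apply: le_trans (lee_wpmul2l _ (Dtest_pow_le k)) _; first by rewrite lee_fin invr_ge0.
  by rewrite -EFinM mulrCA mulKf ?pnatr_eq0.
apply: le_trans Dtest_one_ge _; apply: ereal_sup_ubound; exists 1%N => //.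
by rewrite invr1 mul1e.
Qed.

Lemma Dtest_bar_lt :
  (Dtest_bar a (diag_state p) (diag_state q) < Dtest_hat a (diag_state p) (diag_state q))%E.
Proof.
have a1_lt0 : (a - 1)^-1 < 0 by rewrite invr_lt0 subr_lt0.
rewrite Dtest_hat_eq Dcl_eq.
set L := ln (S a); set c := Num.min c1 c2; have cL : L < c := ln_S_lt_min_c.
set eps := (c - L) / 2; have eps_gt0 : 0 < eps by rewrite divr_gt0 ?subr_gt0.
have [N HN] := ln_le_eps_mul (divr_gt0 eps_gt0 (ltr0n _ 3)).
apply: (le_lt_trans (@limn_esup_le _ _ ((a - 1)^-1 * (c - eps))%:E N.+1 _)); last first.
  by rewrite lte_fin ltr_nM2l // /eps; lra.
move=> [|k] // /ltnW /HN ln_k2.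
apply: le_trans (lee_wpmul2l _ (Dtest_pow_le_rate k)) _; first by rewrite lee_fin invr_ge0.
rewrite -EFinM lee_fin mulrCA ler_nM2l // mulrC ler_pdivlMr ?ltr0n // -/c.
have : ln 2 <= ln k.+2%:R :> R by rewrite ler_ln ?posrE ?ltr0n // ler_nat.
lra.
Qed.

Lemma Dtest_gap :
  (Dtest_bar a (diag_state p) (diag_state q) < Dtest_hat a (diag_state p) (diag_state q))%E /\
  Dtest_hat a (diag_state p) (diag_state q) = Dcl a p q.
Proof. exact: conj Dtest_bar_lt Dtest_hat_eq. Qed.

End BlockProportional.

Theorem mainTheorem3 (R : realType) :
  (forall (d : nat) (p q : 'I_d -> R) (Omega0 : {set 'I_d}) (a : R),
    prob_vec p -> prob_vec q -> p <> q ->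
    (forall w, w \in Omega0 ->
       (\sum_(i in Omega0) q i) * p w = (\sum_(i in Omega0) p i) * q w) ->
    (forall w, w \in ~: Omega0 ->
       (\sum_(i in ~: Omega0) q i) * p w = (\sum_(i in ~: Omega0) p i) * q w) ->
    \sum_(i in Omega0) p i != 0 -> \sum_(i in Omega0) q i != 0 ->
    \sum_(i in ~: Omega0) p i != 0 -> \sum_(i in ~: Omega0) q i != 0 ->
    0 < a < 1 ->
    (Dtest_bar a (diag_state p) (diag_state q)
       < Dtest_hat a (diag_state p) (diag_state q))%E /\
    Dtest_hat a (diag_state p) (diag_state q) = Dcl a p q) /\
  (forall (p q : 'I_2 -> R) (a : R),
    prob_vec p -> prob_vec q -> (forall i, 0 < p i) -> (forall i, 0 < q i) ->
    p <> q -> 0 < a < 1 ->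
    (Dtest_bar a (diag_state p) (diag_state q)
       < Dtest_hat a (diag_state p) (diag_state q))%E /\
    Dtest_hat a (diag_state p) (diag_state q) = Dcl a p q).
Proof.
split=> [d p q Om a hp hq pq in_Om out_Om P0 Q0 P1 Q1 a01|].
  exact: Dtest_gap hp hq pq in_Om out_Om P0 Q0 P1 Q1 a01.
move=> p q a hp hq p_gt0 q_gt0 pq a01.
have Om_c : ~: [set ord0] = [set ord_max] :> {set 'I_2}.
  by apply/setP => i; rewrite !inE; case: i => [[|[|]]].
apply: (Dtest_gap (Om := [set ord0])); rewrite ?Om_c ?big_set1 ?gt_eqF //.
  by move=> w /set1P ->; rewrite mulrC.
by move=> w /set1P ->; rewrite mulrC.
Qed.
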